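(* Let $\mathcal{H}$ be a hypothesis class with Littlestone dimension $d<\infty$, and let $k\ge0$, $l\ge0$ be integers with $k\ge l+d$. Then \[ \mathrm{ELdim}(\mathcal{H}^l,k)\le (k+1)\, e^{\frac{2k+2}{k+1-l-d}}. \]
   Context: Hypotheses are maps $\mathcal{X}\to\{-1,+1\}$. The Littlestone dimension of $\mathcal{H}$ is the largest $d$ such that there is a complete binary tree of depth $d$ with internal nodes labeled by points of $\mathcal{X}$ such that every root-to-leaf path (left = label $-1$, right = $+1$) is agreed with by some $h\in\mathcal{H}$. $\mathcal{C}^l$ is the class of functions $x\mapsto1-2I(x\in D)$ with $D\subseteq\mathcal{X}$, $|D|\le l$; $\mathcal{H}^l=\{x\mapsto h(x)c(x):h\in\mathcal{H},c\in\mathcal{C}^l\}$. Extended mistake tree w.r.t. a class $\mathcal{F}$: a finite full binary tree (possibly a single leaf) in which each internal node $v$ is labeled by $x_v\in\mathcal{X}$ and has two solid downward edges, to its left child (label $-1$) and right child (label $+1$), plus one dashed downward edge to one of its two children; each leaf is labeled by some $h\in\mathcal{F}$ with $h(x_v)$ equal to the direction label at every internal node $v$ on the root-to-leaf path. A root-to-leaf path chooses at each internal node one downward edge; its length is its number of edges. The tree is $(k,m)$-difficult if every root-to-leaf path using at most $k$ solid edges has length at least $m$. $\mathrm{ELdim}(\mathcal{F},k)$ is the supremum of $m$ such that a $(k,m)$-difficult extended mistake tree w.r.t. $\mathcal{F}$ exists. *)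

(* Labels {-1,+1} are encoded as bool: false = -1, true = +1. *)
From Stdlib Require Import Reals List Arith.
Import ListNotations.

Inductive ltree (X : Type) : Type :=
| LLeaf : ltree X
| LNode : X -> ltree X -> ltree X -> ltree X.
Arguments LLeaf {X}.
Arguments LNode {X} _ _ _.

Fixpoint lcomplete {X : Type} (d : nat) (t : ltree X) : Prop :=
  match t, d with
  | LLeaf, 0 => True
  | LNode _ l r, S d' => lcomplete d' l /\ lcomplete d' r
  | _, _ => False
  end.

(* every root-to-leaf path (left = -1 = false, right = +1 = true) is agreed
   with by some hypothesis satisfying P *)
Fixpoint lshattered {X : Type} (P : (X -> bool) -> Prop) (t : ltree X) : Prop :=
  match t with
  | LLeaf => exists h, P h
  | LNode x l r =>
      lshattered (fun h => P h /\ h x = false) l /\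
      lshattered (fun h => P h /\ h x = true) r
  end.

Definition Ldim_eq {X : Type} (H : (X -> bool) -> Prop) (d : nat) : Prop :=
  (exists t, lcomplete d t /\ lshattered H t) /\
  (forall d' t, lcomplete d' t -> lshattered H t -> d' <= d).

(* f = h * c with c = 1 - 2 I(x in D), |D| <= l; D given by a list of length <= l *)
Definition Hl {X : Type} (H : (X -> bool) -> Prop) (l : nat) (f : X -> bool) : Prop :=
  exists h, H h /\ exists D : list X, length D <= l /\
    forall x, (In x D -> f x = negb (h x)) /\ (~ In x D -> f x = h x).

(* ENode x dash l r : internal node labelled x, solid edges to l (label -1)
   and r (label +1), dashed edge to r if dash = true, to l if dash = false. *)
Inductive etree (X : Type) : Type :=
| ELeaf : (X -> bool) -> etree X
| ENode : X -> bool -> etree X -> etree X -> etree X.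
Arguments ELeaf {X} _.
Arguments ENode {X} _ _ _ _.

(* leaf labels belong to F and agree with the directions on the path;
   cons records the (x_v, direction) pairs above the current subtree *)
Fixpoint etree_wf {X : Type} (F : (X -> bool) -> Prop) (cons : list (X * bool))
  (t : etree X) : Prop :=
  match t with
  | ELeaf h => F h /\ Forall (fun p => h (fst p) = snd p) cons
  | ENode x _ l r => etree_wf F ((x, false) :: cons) l /\
                     etree_wf F ((x, true) :: cons) r
  end.

Definition ext_mistake_tree {X : Type} (F : (X -> bool) -> Prop) (t : etree X) : Prop :=
  etree_wf F [] t.

(* every root-to-leaf path using at most k solid edges has length >= m *)
Fixpoint difficult {X : Type} (k m : nat) (t : etree X) : Prop :=
  match t with
  | ELeaf _ => m = 0
  | ENode _ dash l r =>
      difficult k (m - 1) (if dash then r else l) /\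
      (0 < k -> difficult (k - 1) (m - 1) l /\ difficult (k - 1) (m - 1) r)
  end.

Definition ELdim_le {X : Type} (F : (X -> bool) -> Prop) (k : nat) (B : R) : Prop :=
  forall (m : nat) (t : etree X), ext_mistake_tree F t -> difficult k m t -> (INR m <= B)%R.

(* Count the vertices at depth [m] of an extended mistake tree whose path of
   directions is followed by some hypothesis.  If every path with at most [k]
   solid edges has length at least [m], Pascal's rule along the tree gives at
   least [sum_(i <= k+1) C(m, i)] such vertices, each realized by [H^l].
   Conversely, at every query one of the two sides of [H] loses a unit of
   Littlestone dimension, while a perturbed hypothesis disagreeing with its
   base point at the query spends one of its [l] flips; this Sauer-Shelah type
   recursion bounds the count by [sum_(i <= d) C(m, i) * sum_(i <= l) C(m, i)].
   Finally [(m / (k+1))^(k+1) <= C(m, k+1)] and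
   [sum_(i <= a) C(m, i) <= e^(k+1) (m / (k+1))^a] bound [m]. *)

From Stdlib Require Import Reals.
From Stdlib Require Import Lra Lia List Classical ClassicalEpsilon.

Definition indicator (Q : Prop) : nat := if excluded_middle_informative Q then 1 else 0.

Lemma indicator_le_1 Q : indicator Q <= 1.
Proof. unfold indicator. destruct excluded_middle_informative; lia. Qed.

Lemma indicator_true (Q : Prop) : Q -> indicator Q = 1.
Proof. unfold indicator. destruct excluded_middle_informative; tauto. Qed.

Lemma indicator_false (Q : Prop) : ~ Q -> indicator Q = 0.
Proof. unfold indicator. destruct excluded_middle_informative; tauto. Qed.

Lemma indicator_or (Q Q1 Q2 : Prop) : (Q -> Q1 \/ Q2) -> indicator Q <= indicator Q1 + indicator Q2.
Proof. unfold indicator. do 3 destruct excluded_middle_informative; tauto || lia. Qed.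

(* [binom_sum_lt m j] is the sum of the binomial coefficients [C(m, i)] over
   [i < j]; with a strict bound, [j = 0] gives the empty sum. *)
Fixpoint binom_sum_lt (m j : nat) : nat :=
  match m, j with
  | _, 0 => 0
  | 0, S _ => 1
  | S m', S j' => binom_sum_lt m' j + binom_sum_lt m' j'
  end.

Lemma binom_sum_lt_pos m j : 1 <= binom_sum_lt m (S j).
Proof.
  revert j; induction m as [|m IH]; intros j; simpl; [lia|].
  specialize (IH j). lia.
Qed.

Lemma binom_sum_lt_1 m : binom_sum_lt m 1 = 1.
Proof. induction m as [|m IH]; simpl; [|rewrite IH; destruct m]; reflexivity. Qed.

Section Trees.

Context {X : Type}.
Implicit Types (A B F P Q : (X -> bool) -> Prop).

Lemma lshattered_inhabited (t : ltree X) P : lshattered P t -> exists h, P h.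
Proof.
  revert P; induction t as [|x l IHl r IHr]; intros P Hs; [exact Hs|].
  destruct Hs as [Hl _]. destruct (IHl _ Hl) as [h [Ph _]]. eauto.
Qed.

Lemma lshattered_mono (t : ltree X) P Q : (forall h, P h -> Q h) -> lshattered P t -> lshattered Q t.
Proof.
  revert P Q; induction t as [|x l IHl r IHr]; intros P Q HPQ Hs; simpl in *.
  - destruct Hs as [h Ph]; eauto.
  - destruct Hs as [Hl Hr]; split; [eapply IHl | eapply IHr]; eauto;
      simpl; intros h [Ph Hx]; auto.
Qed.

Lemma lshattered_truncate (t : ltree X) P n j :
  lcomplete n t -> lshattered P t -> j <= n -> exists t', lcomplete j t' /\ lshattered P t'.
Proof.
  revert P n j; induction t as [|x l IHl r IHr]; intros P n j Hc Hs Hj.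
  - destruct n; [|contradiction]. exists LLeaf. split; [now replace j with 0 by lia | exact Hs].
  - destruct n as [|n]; [contradiction|]. destruct Hc as [Hcl Hcr], Hs as [Hsl Hsr].
    destruct j as [|j].
    + exists LLeaf. split; [exact I|].
      destruct (lshattered_inhabited _ _ Hsl) as [h [Ph _]]. exists h; exact Ph.
    + destruct (IHl _ _ j Hcl Hsl ltac:(lia)) as [l' [Hcl' Hsl']].
      destruct (IHr _ _ j Hcr Hsr ltac:(lia)) as [r' [Hcr' Hsr']].
      exists (LNode x l' r'). split; split; assumption.
Qed.

Definition ldim_lt A (a : nat) : Prop :=
  forall n (t : ltree X), lcomplete n t -> lshattered A t -> n < a.

Lemma ldim_lt_mono A B a : (forall h, B h -> A h) -> ldim_lt A a -> ldim_lt B a.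
Proof. intros HBA HA n t Hc Hs. apply (HA n t Hc). exact (lshattered_mono t _ _ HBA Hs). Qed.

Lemma ldim_lt_0_empty A h : ldim_lt A 0 -> ~ A h.
Proof. intros HA Ah. specialize (HA 0 LLeaf I (ex_intro _ h Ah)). lia. Qed.

Lemma shattered_of_not_ldim_lt A a :
  ~ ldim_lt A a -> exists t, lcomplete a t /\ lshattered A t.
Proof.
  intros N. apply NNPP. intros Nt. apply N. intros n t Hc Hs.
  apply Nat.nle_gt. intros Han. apply Nt. exact (lshattered_truncate t A n a Hc Hs Han).
Qed.

(* Two shattered trees of depth [a] below the two sides of [x] would make a
   shattered tree of depth [a + 1]. *)
Lemma ldim_lt_split A x a :
  ldim_lt A (S a) ->
  ldim_lt (fun h => A h /\ h x = false) a \/ ldim_lt (fun h => A h /\ h x = true) a.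
Proof.
  intros HA. apply NNPP. intros N. apply not_or_and in N as [N0 N1].
  destruct (shattered_of_not_ldim_lt _ _ N0) as [t0 [Hc0 Hs0]].
  destruct (shattered_of_not_ldim_lt _ _ N1) as [t1 [Hc1 Hs1]].
  specialize (HA (S a) (LNode x t0 t1) (conj Hc0 Hc1) (conj Hs0 Hs1)). lia.
Qed.

Definition set_at A (x : X) (b : bool) (f : X -> bool) : Prop :=
  f x = b /\ exists h, A h /\ h x = negb b /\ forall y, y <> x -> f y = h y.

(* A class that is constant at [x] cannot shatter a tree querying [x]. *)
Lemma lshattered_agree_off (t : ltree X) P Q x b :
  (forall h, P h -> h x = b) ->
  (forall f, P f -> exists h, Q h /\ forall y, y <> x -> f y = h y) ->
  lshattered P t -> lshattered Q t.
Proof.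
  revert P Q; induction t as [|y l IHl r IHr]; intros P Q Hconst Hagree Hs; simpl in *.
  - destruct Hs as [f Pf]. destruct (Hagree f Pf) as [h [Qh _]]. eauto.
  - destruct Hs as [Hsl Hsr]. destruct (classic (y = x)) as [->|Hyx].
    + destruct (lshattered_inhabited _ _ Hsl) as [f0 [Pf0 Hf0]].
      destruct (lshattered_inhabited _ _ Hsr) as [f1 [Pf1 Hf1]].
      rewrite Hconst in Hf0, Hf1 by assumption. congruence.
    + split; [apply (IHl (fun h => P h /\ h y = false)) | apply (IHr (fun h => P h /\ h y = true))];
        try assumption; try (intros h [Ph _]; auto; fail);
        intros f [Pf Hfy]; destruct (Hagree f Pf) as [h [Qh Hfh]];
        exists h; rewrite <- Hfh by congruence; auto.
Qed.

Lemma ldim_lt_set_at A x b a :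
  ldim_lt (fun h => A h /\ h x = negb b) a -> ldim_lt (set_at A x b) a.
Proof.
  intros HA n t Hc Hs. apply (HA n t Hc).
  apply (lshattered_agree_off t (set_at A x b) _ x b); [now intros h [Hx _] | | exact Hs].
  intros f [_ [h [Ah [Hx Hfh]]]]. eauto.
Qed.

(* Perturbations at fewer than [r] points, [Hl_lt A (S r) = Hl A r]; the shift
   makes [Hl_lt A 0] the empty class, so the recursion below is uniform in [r]. *)
Definition Hl_lt A (r : nat) : (X -> bool) -> Prop :=
  match r with 0 => fun _ => False | S r' => Hl A r' end.

Lemma Hl_lt_inhabited A r f : Hl_lt A r f -> exists h, A h.
Proof. destruct r as [|r]; [contradiction|]. intros [h [Ah _]]. eauto. Qed.

Lemma Hl_lt_split A r x b f :
  Hl_lt A (S r) f -> f x = b ->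
  Hl_lt (fun h => A h /\ h x = b) (S r) f \/ Hl_lt (set_at A x b) r f.
Proof.
  intros [h [Ah [D [HD Hf]]]] Hfx.
  destruct (Bool.bool_dec (h x) b) as [Hhx|Hhx].
  { left. exists h. split; [split; assumption|]. exists D. auto. }
  right.
  assert (HxD : In x D).
  { apply NNPP. intros N. apply Hhx. rewrite <- Hfx. symmetry. exact (proj2 (Hf x) N). }
  set (eqd := fun y z : X => excluded_middle_informative (y = z)).
  destruct r as [|r]; [destruct D; [contradiction | simpl in HD; lia]|].
  exists (fun y => if eqd y x then b else h y). split.
  - split; [now destruct (eqd x x)|].
    exists h. split; [assumption|]. split; [now destruct b, (h x)|].
    intros y Hyx. now destruct (eqd y x).
  - exists (remove eqd x D). split; [pose proof (remove_length_lt eqd D x HxD); lia|].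
    intros y. destruct (eqd y x) as [->|Hyx]; split.
    + intros Hin. destruct (remove_In eqd D x Hin).
    + now intros _.
    + intros Hin. apply (proj1 (Hf y)). exact (proj1 (in_remove eqd D y x Hin)).
    + intros Hnin. apply (proj2 (Hf y)). intros HyD. exact (Hnin (in_in_remove eqd D Hyx HyD)).
Qed.

(* The number of vertices of [t] at depth [m] (or leaves above that depth)
   whose path of directions is followed by some hypothesis in [P]. *)
Fixpoint nrealized P (t : etree X) (m : nat) {struct t} : nat :=
  match t, m with
  | ENode x _ l r, S m =>
      nrealized (fun h => P h /\ h x = false) l m + nrealized (fun h => P h /\ h x = true) r m
  | _, _ => indicator (exists h, P h)
  end.

Lemma nrealized_or t m P Q1 Q2 :
  (forall h, P h -> Q1 h \/ Q2 h) -> nrealized P t m <= nrealized Q1 t m + nrealized Q2 t m.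
Proof.
  revert m P Q1 Q2; induction t as [h|x b l IHl r IHr]; intros m P Q1 Q2 HPQ;
    [|destruct m as [|m]]; simpl;
    try (apply indicator_or; intros [f Pf]; destruct (HPQ f Pf); eauto; fail).
  assert (Hside : forall c h, P h /\ h x = c -> (Q1 h /\ h x = c) \/ (Q2 h /\ h x = c))
    by (intros c h [Ph Hx]; destruct (HPQ h Ph); tauto).
  pose proof (IHl m _ _ _ (Hside false)). pose proof (IHr m _ _ _ (Hside true)). lia.
Qed.

Lemma nrealized_empty t m P : (forall h, ~ P h) -> nrealized P t m = 0.
Proof.
  revert m P; induction t as [h|x b l IHl r IHr]; intros m P HP; [|destruct m as [|m]]; simpl;
    try (apply indicator_false; intros [f Pf]; exact (HP f Pf)).
  rewrite IHl, IHr; [reflexivity | |]; intros f [Pf _]; exact (HP f Pf).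
Qed.

Lemma nrealized_mono t m P Q : (forall h, P h -> Q h) -> nrealized P t m <= nrealized Q t m.
Proof.
  intros HPQ. pose proof (nrealized_or t m P Q (fun _ => False) ltac:(auto)) as Hor.
  rewrite (nrealized_empty t m (fun _ => False)) in Hor by auto. lia.
Qed.

Lemma nrealized_le_1 t m P : (m = 0 \/ exists h, t = ELeaf h) -> nrealized P t m <= 1.
Proof. intros [-> | [h ->]]; [destruct t|]; apply indicator_le_1. Qed.

Lemma nrealized_Hl_lt m t A a r :
  ldim_lt A a -> nrealized (Hl_lt A r) t m <= binom_sum_lt m a * binom_sum_lt m r.
Proof.
  revert t A a r; induction m as [|m IH]; intros t A [|a] [|r] HA;
    try (rewrite nrealized_empty; [lia|]; intros f Hf; destruct (Hl_lt_inhabited _ _ _ Hf) as [h Ah];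
         exact (ldim_lt_0_empty _ _ HA Ah));
    try (rewrite nrealized_empty; [lia|]; intros f Hf; exact Hf).
  - pose proof (nrealized_le_1 t 0 (Hl_lt A (S r)) (or_introl eq_refl)). cbn [binom_sum_lt]. lia.
  - destruct t as [h|x b tl tr].
    { pose proof (nrealized_le_1 (ELeaf h) (S m) (Hl_lt A (S r)) (or_intror (ex_intro _ h eq_refl))).
      pose proof (binom_sum_lt_pos (S m) a). pose proof (binom_sum_lt_pos (S m) r). nia. }
    assert (Hside : forall c e (a0 a1 : nat),
               ldim_lt (fun h => A h /\ h x = c) a0 -> ldim_lt (fun h => A h /\ h x = negb c) a1 ->
               nrealized (fun f => Hl A r f /\ f x = c) e m
               <= binom_sum_lt m a0 * binom_sum_lt m (S r) + binom_sum_lt m a1 * binom_sum_lt m r).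
    { intros c e a0 a1 H0 H1.
      eapply Nat.le_trans; [apply (nrealized_or _ _ _ (Hl_lt (fun h => A h /\ h x = c) (S r)) (Hl_lt (set_at A x c) r)) |].
      { intros f [Hf Hfx]. exact (Hl_lt_split A r x c f Hf Hfx). }
      pose proof (IH e _ _ (S r) H0). pose proof (IH e _ _ r (ldim_lt_set_at _ _ _ _ H1)). lia. }
    assert (HA' : forall c, ldim_lt (fun h => A h /\ h x = c) (S a))
      by (intros c; eapply ldim_lt_mono; [|exact HA]; intros h [Ah _]; exact Ah).
    simpl nrealized. change (binom_sum_lt (S m) (S ?j)) with (binom_sum_lt m (S j) + binom_sum_lt m j).
    destruct (ldim_lt_split A x a HA) as [Ha|Ha].
    + pose proof (Hside false tl a (S a) Ha (HA' true)).
      pose proof (Hside true tr (S a) a (HA' true) Ha). nia.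
    + pose proof (Hside false tl (S a) a (HA' false) Ha).
      pose proof (Hside true tr a (S a) Ha (HA' false)). nia.
Qed.

Definition consistent F (cons : list (X * bool)) (h : X -> bool) : Prop :=
  F h /\ Forall (fun p => h (fst p) = snd p) cons.

Lemma consistent_cons F cons x c h :
  consistent F ((x, c) :: cons) h -> consistent F cons h /\ h x = c.
Proof. intros [Fh Hcons]. inversion Hcons. repeat split; assumption. Qed.

Lemma nrealized_consistent_cons F cons x c t m :
  nrealized (consistent F ((x, c) :: cons)) t m
  <= nrealized (fun h => consistent F cons h /\ h x = c) t m.
Proof. apply nrealized_mono, consistent_cons. Qed.

Lemma etree_wf_consistent F cons t : etree_wf F cons t -> exists h, consistent F cons h.
Proof.
  revert cons; induction t as [h|x b l IHl r IHr]; intros cons Hwf; [exists h; exact Hwf|].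
  destruct (IHl _ (proj1 Hwf)) as [h Hh]. exists h. exact (proj1 (consistent_cons _ _ _ _ _ Hh)).
Qed.

Lemma nrealized_consistent_pos F cons t m :
  etree_wf F cons t -> 1 <= nrealized (consistent F cons) t m.
Proof.
  revert cons m; induction t as [h|x b l IHl r IHr]; intros cons m Hwf;
    [|destruct m as [|m]]; simpl;
    try (rewrite indicator_true; [lia | exact (etree_wf_consistent _ _ _ Hwf)]).
  pose proof (IHl _ m (proj1 Hwf)). pose proof (nrealized_consistent_cons F cons x false l m).
  lia.
Qed.

Lemma difficult_nrealized F cons t k m :
  etree_wf F cons t -> difficult k m t ->
  binom_sum_lt m (S (S k)) <= nrealized (consistent F cons) t m.
Proof.
  revert cons k m; induction t as [h|x dash l IHl r IHr]; intros cons k m Hwf Hd.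
  { simpl in Hd; subst m. exact (nrealized_consistent_pos F cons _ 0 Hwf). }
  destruct m as [|m]; [exact (nrealized_consistent_pos F cons _ 0 Hwf)|].
  destruct Hwf as [Hwfl Hwfr]. cbn [difficult] in Hd. rewrite Nat.sub_1_r in Hd; simpl pred in Hd.
  destruct Hd as [Hdash Hsolid].
  set (Tl := nrealized (fun h => consistent F cons h /\ h x = false) l m).
  set (Tr := nrealized (fun h => consistent F cons h /\ h x = true) r m).
  assert (Hl : forall k', difficult k' m l -> binom_sum_lt m (S (S k')) <= Tl)
    by (intros k' Hk'; eapply Nat.le_trans;
        [exact (IHl _ _ _ Hwfl Hk') | apply nrealized_consistent_cons]).
  assert (Hr : forall k', difficult k' m r -> binom_sum_lt m (S (S k')) <= Tr)
    by (intros k' Hk'; eapply Nat.le_trans;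
        [exact (IHr _ _ _ Hwfr Hk') | apply nrealized_consistent_cons]).
  assert (Hboth : binom_sum_lt m (S k) <= Tl /\ binom_sum_lt m (S k) <= Tr).
  { destruct k as [|k].
    - rewrite binom_sum_lt_1. split; eapply Nat.le_trans;
        [ exact (nrealized_consistent_pos _ _ _ m Hwfl) | apply nrealized_consistent_cons
        | exact (nrealized_consistent_pos _ _ _ m Hwfr) | apply nrealized_consistent_cons ].
    - destruct (Hsolid ltac:(lia)) as [Hdl Hdr]. rewrite Nat.sub_1_r in Hdl, Hdr.
      exact (conj (Hl _ Hdl) (Hr _ Hdr)). }
  change (binom_sum_lt m (S (S k)) + binom_sum_lt m (S k) <= Tl + Tr).
  destruct dash; [pose proof (Hr _ Hdash) | pose proof (Hl _ Hdash)]; lia.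
Qed.

End Trees.

Fixpoint choose (m j : nat) : nat :=
  match m, j with
  | _, 0 => 1
  | 0, S _ => 0
  | S m', S j' => choose m' j + choose m' j'
  end.

Lemma choose_le_binom_sum_lt m j : choose m j <= binom_sum_lt m (S j).
Proof.
  revert j; induction m as [|m IH]; intros [|j]; simpl; try lia.
  - rewrite binom_sum_lt_1. lia.
  - pose proof (IH (S j)). pose proof (IH j). lia.
Qed.

Lemma choose_0_r m : choose m 0 = 1.
Proof. now destruct m. Qed.

Lemma choose_absorption m j : S j * choose (S m) (S j) = S m * choose m j.
Proof.
  revert j; induction m as [|m IH]; intros j; [destruct j; simpl; lia|].
  change (choose (S (S m)) (S j)) with (choose (S m) (S j) + choose (S m) j).
  rewrite Nat.mul_add_distr_l, IH.
  destruct j as [|j]; [rewrite !choose_0_r; lia|].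
  pose proof (IH j). change (choose (S m) (S j)) with (choose m (S j) + choose m j) in *. nia.
Qed.

Section Estimates.

Local Open Scope R_scope.

(* From [C(m, j) = (m / j) * C(m - 1, j - 1)] and [(m - 1) / (j - 1) >= m / j]. *)
Lemma choose_lower_bound (m j : nat) : (0 < j <= m)%nat -> (INR m / INR j) ^ j <= INR (choose m j).
Proof.
  revert m; induction j as [|j IH]; intros m Hjm; [lia|].
  destruct m as [|m]; [lia|].
  assert (Hj : 0 < INR (S j)) by (apply lt_0_INR; lia).
  assert (Hrec : INR (choose (S m) (S j)) = INR (S m) / INR (S j) * INR (choose m j)).
  { apply (Rmult_eq_reg_l (INR (S j))); [|lra].
    rewrite <- mult_INR, choose_absorption, mult_INR. field. lra. }
  rewrite Hrec. cbn [pow].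
  assert (Hpos : 0 < INR (S m) / INR (S j)) by (apply Rdiv_lt_0_compat; [apply lt_0_INR; lia | lra]).
  apply Rmult_le_compat_l; [lra|].
  destruct j as [|j]; [rewrite choose_0_r; simpl; lra|].
  eapply Rle_trans; [|apply IH; lia].
  apply pow_incr. split; [lra|].
  assert (Hjm' : INR (S j) <= INR m) by (apply le_INR; lia).
  pose proof (pos_INR j).
  rewrite !S_INR in *. apply (Rmult_le_reg_r ((INR j + 1 + 1) * (INR j + 1))); [nra|].
  field_simplify; [nra | lra | lra].
Qed.

Lemma binom_sum_lt_mul_pow_le (m a : nat) z :
  0 <= z <= 1 -> INR (binom_sum_lt m (S a)) * z ^ a <= (1 + z) ^ m.
Proof.
  intros Hz. revert a; induction m as [|m IH]; intros a.
  - assert (Hza : z ^ a <= 1 ^ a) by (apply pow_incr; lra). rewrite pow1 in Hza. simpl. lra.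
  - destruct a as [|a].
    + rewrite binom_sum_lt_1. pose proof (pow_R1_Rle (1 + z) (S m) ltac:(lra)). simpl in *. lra.
    + change (binom_sum_lt (S m) (S (S a))) with (binom_sum_lt m (S (S a)) + binom_sum_lt m (S a))%nat.
      rewrite plus_INR. pose proof (IH (S a)). pose proof (IH a). cbn [pow] in *.
      pose proof (pow_le z a (proj1 Hz)). nra.
Qed.

Lemma exp_mul_INR (n : nat) y : exp (INR n * y) = exp y ^ n.
Proof.
  induction n as [|n IH]; [simpl; rewrite Rmult_0_l; apply exp_0|].
  rewrite S_INR, Rmult_plus_distr_r, Rmult_1_l, exp_plus, IH. simpl. ring.
Qed.

Lemma binom_sum_lt_scaled_le_exp (m a : nat) K :
  0 < K <= INR m -> INR (binom_sum_lt m (S a)) * (K / INR m) ^ a <= exp K.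
Proof.
  intros HK. set (z := K / INR m).
  assert (Hz : 0 <= z <= 1).
  { unfold z, Rdiv. split; [apply Rlt_le, Rmult_lt_0_compat; [lra | apply Rinv_0_lt_compat; lra]|].
    rewrite <- (Rinv_r (INR m)) by lra. apply Rmult_le_compat_r; [apply Rlt_le, Rinv_0_lt_compat|]; lra. }
  eapply Rle_trans; [exact (binom_sum_lt_mul_pow_le m a z Hz)|].
  replace K with (INR m * z) by (unfold z; field; lra).
  rewrite exp_mul_INR. apply pow_incr. split; [lra | apply exp_ineq1_le].
Qed.

Lemma le_exp_div_of_pow_le x c (n : nat) : 0 < x -> (0 < n)%nat -> x ^ n <= exp c -> x <= exp (c / INR n).
Proof.
  intros Hx Hn Hpow. rewrite <- (exp_ln x) by exact Hx.
  apply Rnot_lt_le. intros Hlt. apply exp_lt_inv in Hlt.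
  assert (Hn' : 0 < INR n) by (apply lt_0_INR; exact Hn).
  assert (c < ln (x ^ n)).
  { rewrite ln_pow by exact Hx. apply (Rmult_lt_compat_l (INR n)) in Hlt; [|exact Hn'].
    replace (INR n * (c / INR n)) with c in Hlt by (field; lra). exact Hlt. }
  apply exp_increasing in H. rewrite exp_ln in H by (apply pow_lt; exact Hx). lra.
Qed.

Lemma binom_sum_lt_product_pow_le (m k d l : nat) :
  (l + d <= k)%nat -> (S k < m)%nat ->
  (binom_sum_lt m (S (S k)) <= binom_sum_lt m (S d) * binom_sum_lt m (S l))%nat ->
  (INR m / INR (S k)) ^ (S k - (d + l)) <= exp (2 * INR (S k)).
Proof.
  intros Hk Hm Hprod. set (K := INR (S k)).
  assert (HK : 0 < K) by (apply lt_0_INR; lia).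
  assert (HmK : K < INR m) by (apply lt_INR; exact Hm).
  set (x := INR m / K). set (z := K / INR m).
  assert (Hxz : x * z = 1) by (unfold x, z; field; lra).
  assert (Hz : 0 < z) by (apply Rdiv_lt_0_compat; lra).
  assert (Hlow : x ^ S k <= INR (binom_sum_lt m (S d)) * INR (binom_sum_lt m (S l))).
  { rewrite <- mult_INR. eapply Rle_trans; [|apply le_INR; exact Hprod].
    eapply Rle_trans; [|apply le_INR, choose_le_binom_sum_lt].
    apply choose_lower_bound. lia. }
  assert (Hup : x ^ S k * (z ^ d * z ^ l) <= exp K * exp K).
  { pose proof (binom_sum_lt_scaled_le_exp m d K ltac:(lra)) as Hd.
    pose proof (binom_sum_lt_scaled_le_exp m l K ltac:(lra)) as Hl.
    fold z in Hd, Hl.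
    assert (Hzd : 0 <= z ^ d) by (apply pow_le; lra).
    assert (Hzl : 0 <= z ^ l) by (apply pow_le; lra).
    eapply Rle_trans; [apply Rmult_le_compat_r; [apply Rmult_le_pos; assumption | exact Hlow]|].
    replace (INR (binom_sum_lt m (S d)) * INR (binom_sum_lt m (S l)) * (z ^ d * z ^ l))
      with ((INR (binom_sum_lt m (S d)) * z ^ d) * (INR (binom_sum_lt m (S l)) * z ^ l)) by ring.
    apply Rmult_le_compat; try assumption; apply Rmult_le_pos; try assumption; apply pos_INR. }
  replace (S k) with (S k - (d + l) + d + l)%nat in Hup at 1 by lia.
  rewrite !pow_add in Hup.
  replace (x ^ (S k - (d + l)) * x ^ d * x ^ l * (z ^ d * z ^ l))
    with (x ^ (S k - (d + l)) * ((x * z) ^ d * (x * z) ^ l)) in Hup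
    by (rewrite !Rpow_mult_distr; ring).
  rewrite Hxz, !pow1, <- exp_plus in Hup.
  replace (2 * K) with (K + K) by ring. lra.
Qed.

Lemma binom_sum_lt_product_bound (m k d l : nat) :
  (l + d <= k)%nat ->
  (binom_sum_lt m (S (S k)) <= binom_sum_lt m (S d) * binom_sum_lt m (S l))%nat ->
  INR m <= (INR k + 1) * exp ((2 * INR k + 2) / (INR k + 1 - INR l - INR d)).
Proof.
  intros Hk Hprod.
  replace (INR k + 1 - INR l - INR d) with (INR (S k - (d + l)))
    by (rewrite minus_INR, S_INR, plus_INR by lia; ring).
  replace (2 * INR k + 2) with (2 * INR (S k)) by (rewrite S_INR; ring).
  rewrite <- S_INR.
  assert (HK : 0 < INR (S k)) by (apply lt_0_INR; lia).
  destruct (Nat.le_gt_cases m (S k)) as [Hm|Hm].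
  - assert (INR m <= INR (S k)) by (apply le_INR; exact Hm).
    assert (1 <= exp (2 * INR (S k) / INR (S k - (d + l)))).
    { eapply Rle_trans; [|apply exp_ineq1_le].
      assert (0 < INR (S k - (d + l))) by (apply lt_0_INR; lia).
      assert (0 <= 2 * INR (S k) / INR (S k - (d + l))) by (apply Rlt_le, Rdiv_lt_0_compat; lra).
      lra. }
    nra.
  - pose proof (binom_sum_lt_product_pow_le m k d l Hk Hm Hprod) as Hpow.
    apply le_exp_div_of_pow_le in Hpow; [|apply Rdiv_lt_0_compat; [apply lt_0_INR; lia | lra] | lia].
    replace (INR m) with (INR (S k) * (INR m / INR (S k))) by (field; lra).
    apply Rmult_le_compat_l; lra.
Qed.

End Estimates.

Theorem mainTheorem6 (X : Type) (H : (X -> bool) -> Prop) (d k l : nat) :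
  Ldim_eq H d -> l + d <= k ->
  ELdim_le (Hl H l) k
    ((INR k + 1) * exp ((2 * INR k + 2) / (INR k + 1 - INR l - INR d)))%R.
Proof.
  intros [_ Hdim] Hk m t Hwf Hdiff.
  apply (binom_sum_lt_product_bound m k d l Hk).
  assert (HdimH : ldim_lt H (S d)) by (intros n t' Hc Hs; specialize (Hdim n t' Hc Hs); lia).
  eapply Nat.le_trans; [exact (difficult_nrealized _ _ _ _ _ Hwf Hdiff)|].
  eapply Nat.le_trans; [apply (nrealized_mono _ _ _ (Hl_lt H (S l))); intros h [Hh _]; exact Hh|].
  exact (nrealized_Hl_lt m t H (S d) (S l) HdimH).
Qed.
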